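(* Each of the following eight sets of four generalized Bell states in $\mathbb{C}^4\otimes\mathbb{C}^4$ is perfectly distinguishable by one-way LOCC using only projective measurements: $\{\ket{\psi_{00}}\}\cup T$ with $T$ one of $\{\ket{\psi_{01}},\ket{\psi_{02}},\ket{\psi_{12}}\}$, $\{\ket{\psi_{01}},\ket{\psi_{02}},\ket{\psi_{30}}\}$, $\{\ket{\psi_{01}},\ket{\psi_{11}},\ket{\psi_{21}}\}$, $\{\ket{\psi_{01}},\ket{\psi_{12}},\ket{\psi_{20}}\}$, $\{\ket{\psi_{01}},\ket{\psi_{20}},\ket{\psi_{30}}\}$, $\{\ket{\psi_{01}},\ket{\psi_{21}},\ket{\psi_{33}}\}$, $\{\ket{\psi_{02}},\ket{\psi_{10}},\ket{\psi_{21}}\}$, $\{\ket{\psi_{02}},\ket{\psi_{21}},\ket{\psi_{32}}\}$.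
   Context: Generalized Bell states in $\mathbb{C}^4\otimes\mathbb{C}^4$ (Alice holds the first factor, Bob the second): $\ket{\psi_{nm}}=\frac12\sum_{j=0}^{3}e^{2\pi i jn/4}\ket{j}_A\ket{j\oplus_4 m}_B$ for $n,m\in\{0,1,2,3\}$, where $j\oplus_4 m=(j+m)\bmod 4$. Perfect distinguishability by one-way LOCC using only projective measurements means: one party performs a projective measurement on her subsystem, communicates the outcome classically, and the other party then performs a projective measurement (depending on that outcome) whose result identifies with certainty which state of the set was shared. *)

(* Complex scalars: an arbitrary numClosedFieldType C
   (algebraically closed field with conjugation and order, e.g. algC). *)
From HB Require Import structures.
From mathcomp Require Import all_boot all_order all_algebra.
Set Implicit Arguments. Unset Strict Implicit. Unset Printing Implicit Defensive.
Import Order.TTheory GRing.Theory Num.Theory.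
Local Open Scope ring_scope.

Section Defs.
Variable C : numClosedFieldType.

Definition adj_mx (d : nat) (A : 'M[C]_d) : 'M[C]_d := (map_mx Num.conj A)^T.

Definition projective_measurement (d m : nat) (P : 'I_m -> 'M[C]_d) : Prop :=
  [/\ forall k, adj_mx (P k) = P k,
      forall k, P k *m P k = P k,
      forall k l, k != l -> P k *m P l = 0
    & \sum_(k < m) P k = 1%:M].

(* A bipartite vector in C^d (x) C^d: psi a b is the coefficient of |a>_A|b>_B. *)
Definition tens_act (d : nat) (A B : 'M[C]_d) (psi : 'M[C]_d) : 'M[C]_d :=
  \matrix_(a, b) \sum_(a' < d) \sum_(b' < d) A a a' * B b b' * psi a' b'.

Definition outcome_prob (d : nat) (A B psi : 'M[C]_d) : C :=
  \sum_(a < d) \sum_(b < d) Num.conj (psi a b) * tens_act A B psi a b.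

(* One-way LOCC with projective measurements, Alice first: Alice measures
   P (outcomes 'I_m), tells k to Bob, Bob measures Q k (outcomes 'I_n);
   the guess g k l identifies the state with certainty. *)
Definition oneway_alice_first (d r : nat) (psi : 'I_r -> 'M[C]_d) : Prop :=
  exists (m n : nat) (P : 'I_m -> 'M[C]_d) (Q : 'I_m -> 'I_n -> 'M[C]_d)
         (g : 'I_m -> 'I_n -> 'I_r),
    [/\ projective_measurement P,
        forall k, projective_measurement (Q k)
      & forall s k l, outcome_prob (P k) (Q k l) (psi s) != 0 -> g k l = s].

Definition oneway_bob_first (d r : nat) (psi : 'I_r -> 'M[C]_d) : Prop :=
  exists (m n : nat) (Q : 'I_m -> 'M[C]_d) (P : 'I_m -> 'I_n -> 'M[C]_d)
         (g : 'I_m -> 'I_n -> 'I_r),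
    [/\ projective_measurement Q,
        forall l, projective_measurement (P l)
      & forall s l k, outcome_prob (P l k) (Q l) (psi s) != 0 -> g l k = s].

Definition oneway_LOCC_proj_distinguishable (d r : nat) (psi : 'I_r -> 'M[C]_d)
  : Prop := oneway_alice_first psi \/ oneway_bob_first psi.

(* generalized Bell state psi_{nm} in C^4 (x) C^4:
   (1/2) sum_j e^{2 pi i j n/4} |j>|j+m mod 4>,  e^{2 pi i jn/4} = 'i^(jn). *)
Definition bell (nm : nat * nat) : 'M[C]_4 :=
  \matrix_(a, b) (if (b : nat) == ((a + nm.2) %% 4)%N
                  then 2^-1 * 'i ^+ (a * nm.1) else 0).

Definition bell_family (s : seq (nat * nat)) : 'I_(size s) -> 'M[C]_4 :=
  fun i => bell (nth (0%N, 0%N) s i).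

End Defs.

Definition theorem5_sets : seq (seq (nat * nat)) :=
  [:: [:: (0,1); (0,2); (1,2)];
      [:: (0,1); (0,2); (3,0)];
      [:: (0,1); (1,1); (2,1)];
      [:: (0,1); (1,2); (2,0)];
      [:: (0,1); (2,0); (3,0)];
      [:: (0,1); (2,1); (3,3)];
      [:: (0,2); (1,0); (2,1)];
      [:: (0,2); (2,1); (3,2)]]%N.

From HB Require Import structures.
From mathcomp Require Import all_boot all_order all_algebra.
From mathcomp Require Import zify ring.
Import Order.TTheory GRing.Theory Num.Theory.
Set Implicit Arguments. Unset Strict Implicit. Unset Printing Implicit Defensive.
Local Open Scope ring_scope.

(* Let zeta be a primitive eighth root of unity (zeta^2 = i). Alice measures in
   the chirped Fourier basis u_k(a) = zeta^(a^2 + 2ka). When she finds k, the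
   state psi_nm leaves Bob with b |-> 1/2 zeta^(phi(b - m)), where
   phi(x) = 2nx - x^2 - 2kx is well defined because phi mod 8 only depends on
   x mod 4. The inner product of Bob's states for psi_nm and psi_n'm' is a
   multiple of sum_b i^(b((n + m) - (n' + m'))), which vanishes unless
   n + m = n' + m' (mod 4). So four Bell states with distinct n + m mod 4 are
   distinguished by Bob projecting onto his four (orthogonal) conditional
   states, and each of the eight sets of the theorem is of this kind. *)

Section RankOneMeasurements.
Variables (C : numClosedFieldType) (d : nat).
Implicit Types (u v : 'I_d -> C) (psi : 'M[C]_d).

Definition dotv u v : C := \sum_i u i * (v i)^*.

Definition rank1_proj v : 'M[C]_d := \matrix_(a, b) (v a * (v b)^* / dotv v v).

Definition orthogonal_basis (v : 'I_d -> 'I_d -> C) : Prop :=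
  (forall k, dotv (v k) (v k) != 0) /\ (forall k l, k != l -> dotv (v k) (v l) = 0).

Definition bob_state psi u : 'I_d -> C := fun b => \sum_a (u a)^* * psi a b.

Lemma eq_dotv u1 u2 v1 v2 : u1 =1 u2 -> v1 =1 v2 -> dotv u1 v1 = dotv u2 v2.
Proof. by move=> eq_u eq_v; apply: eq_bigr => i _; rewrite eq_u eq_v. Qed.

Lemma dotvZ (x y : C) u v :
  dotv (fun i => x * u i) (fun i => y * v i) = x * y^* * dotv u v.
Proof. by rewrite /dotv mulr_sumr; apply: eq_bigr => i _; rewrite rmorphM; ring. Qed.

Lemma conj_dotv u v : (dotv u v)^* = dotv v u.
Proof.
by rewrite rmorph_sum; apply: eq_bigr => i _; rewrite rmorphM /= conjCK mulrC.
Qed.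

Lemma mulmx_rank1_proj u v :
  rank1_proj u *m rank1_proj v =
  (dotv v u / (dotv u u * dotv v v)) *: \matrix_(a, c) (u a * (v c)^*).
Proof.
apply/matrixP => a c; rewrite !mxE; under eq_bigr do rewrite !mxE.
set Nu := dotv u u; set Nv := dotv v v; clearbody Nu Nv.
rewrite /dotv !mulr_suml; apply: eq_bigr => b _.
by rewrite invfM; ring.
Qed.

Lemma rank1_proj_idem v : dotv v v != 0 -> rank1_proj v *m rank1_proj v = rank1_proj v.
Proof.
move=> nz_v; rewrite mulmx_rank1_proj; apply/matrixP => a c; rewrite !mxE.
by field.
Qed.

Lemma rank1_proj_orth u v : dotv v u = 0 -> rank1_proj u *m rank1_proj v = 0.
Proof. by move=> uv; rewrite mulmx_rank1_proj uv mul0r scale0r. Qed.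

Lemma adj_rank1_proj v : adj_mx (rank1_proj v) = rank1_proj v.
Proof.
apply/matrixP => a b; rewrite !mxE !rmorphM /= fmorphV conjCK [_ * v a]mulrC.
by congr (_ / _); exact: conj_dotv.
Qed.

Lemma sum_rank1_proj (v : 'I_d -> 'I_d -> C) :
  orthogonal_basis v -> \sum_k rank1_proj (v k) = 1%:M.
Proof.
case=> nz_v orth_v.
set V := \matrix_(i, k) v k i.
set W := \matrix_(k, i) ((v k i)^* / dotv (v k) (v k)).
have WV : W *m V = 1%:M.
  apply/matrixP => k l; rewrite !mxE.
  under eq_bigr do rewrite !mxE mulrAC.
  rewrite -mulr_suml (eq_bigr (fun i => v l i * (v k i)^*)) => [|i _]; last exact: mulrC.
  rewrite -/(dotv (v l) (v k)); have [<-|kl] := eqVneq k l; first by rewrite divff.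
  by rewrite orth_v 1?eq_sym // mul0r.
apply/matrixP => a c; move/mulmx1C/matrixP/(_ a c): WV; rewrite !mxE summxE => <-.
by apply: eq_bigr => k _; rewrite !mxE mulrA.
Qed.

Lemma rank1_proj_measurement (v : 'I_d -> 'I_d -> C) :
  orthogonal_basis v -> projective_measurement (fun k => rank1_proj (v k)).
Proof.
move=> basis_v; have [nz_v orth_v] := basis_v; split=> [k|k|k l kl|].
- exact: adj_rank1_proj.
- exact: rank1_proj_idem.
- by apply: rank1_proj_orth; apply: orth_v; rewrite eq_sym.
- exact: sum_rank1_proj.
Qed.

Definition amplitude u v psi : C := \sum_a \sum_b (u a)^* * (v b)^* * psi a b.

Lemma amplitude_bob_state u v psi : amplitude u v psi = dotv (bob_state psi u) v.
Proof.
rewrite /dotv /bob_state; under [RHS]eq_bigr do rewrite mulr_suml.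
rewrite exchange_big; apply: eq_bigr => a _; apply: eq_bigr => b _; ring.
Qed.

Lemma tens_act_rank1_proj u v psi a b :
  tens_act (rank1_proj u) (rank1_proj v) psi a b =
  u a * v b / (dotv u u * dotv v v) * amplitude u v psi.
Proof.
rewrite mxE; under eq_bigr do under eq_bigr do rewrite !mxE.
set Nu := dotv u u; set Nv := dotv v v; clearbody Nu Nv.
rewrite mulr_sumr; apply: eq_bigr => a' _; rewrite mulr_sumr; apply: eq_bigr => b' _.
by rewrite invfM; ring.
Qed.

Lemma outcome_prob_rank1_proj u v psi :
  outcome_prob (rank1_proj u) (rank1_proj v) psi =
  amplitude u v psi * (amplitude u v psi)^* / (dotv u u * dotv v v).
Proof.
rewrite /outcome_prob; under eq_bigr do under eq_bigr do rewrite tens_act_rank1_proj.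
set A := amplitude u v psi.
have -> : A^* = \sum_a \sum_b u a * v b * (psi a b)^*.
  rewrite rmorph_sum; apply: eq_bigr => a _; rewrite rmorph_sum; apply: eq_bigr => b _.
  by rewrite !rmorphM /= !conjCK.
clearbody A; set N := dotv u u * dotv v v; clearbody N.
rewrite mulrAC mulr_sumr; apply: eq_bigr => a _.
rewrite mulr_sumr; apply: eq_bigr => b _; ring.
Qed.

Lemma oneway_alice_first_orthogonal (psi : 'I_d -> 'M[C]_d) (u : 'I_d -> 'I_d -> C) :
  orthogonal_basis u ->
  (forall k, orthogonal_basis (fun l => bob_state (psi l) (u k))) ->
  oneway_alice_first psi.
Proof.
move=> basis_u basis_bob.
exists d, d, (fun k => rank1_proj (u k)),
  (fun k l => rank1_proj (bob_state (psi l) (u k))), (fun _ l => l).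
split=> [|k|s k l]; try exact: rank1_proj_measurement.
have [//|ls] := eqVneq l s; have [_ orth_bob] := basis_bob k.
by rewrite outcome_prob_rank1_proj amplitude_bob_state orth_bob 1?eq_sym // !mul0r eqxx.
Qed.

End RankOneMeasurements.

Lemma exprz_mod (F : fieldType) (x : F) (n : nat) (a b : int) :
  (0 < n)%N -> x ^+ n = 1 -> (a = b %[mod n])%Z -> x ^ a = x ^ b.
Proof.
move=> n_gt0 xn1 ab.
have x_neq0 : x != 0.
  by apply: contra_eq_neq xn1 => ->; rewrite expr0n eqn0Ngt n_gt0 eq_sym oner_eq0.
suff red c : x ^ c = x ^ (c %% n)%Z by rewrite red ab -red.
rewrite {1}(divz_eq c n) [(_ %/ _)%Z * _]mulrC expfzDr //.
by rewrite -exprz_exp -exprnP xn1 exp1rz mul1r.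
Qed.

Lemma sum_expr_eq0 (F : fieldType) (z : F) (n : nat) :
  z ^+ n = 1 -> z != 1 -> \sum_(i < n) z ^+ i = 0.
Proof.
move=> zn1 z_neq1; have /esym/eqP := subrX1 z n.
by rewrite zn1 subrr mulf_eq0 subr_eq0 (negbTE z_neq1) => /eqP.
Qed.

Lemma dvdz_natB (d m n : nat) : (d %| m%:Z - n%:Z)%Z = (m == n %[mod d])%N.
Proof. by rewrite -eqz_mod_dvd /eq_op /= !modz_nat. Qed.

Lemma oppr1_neq1 (R : numDomainType) : (-1 : R) != 1.
Proof. by rewrite -subr_eq0 -opprD oppr_eq0 -[1 + 1]/(2%:R) pnatr_eq0. Qed.

Section BellStates.
Variable C : numClosedFieldType.

Definition zeta : C := sqrtC 'i.

Lemma zeta2 : zeta ^+ 2 = 'i. Proof. exact: sqrtCK. Qed.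

Lemma zeta_expz2 (c : int) : zeta ^ (2 * c) = 'i ^ c.
Proof. by rewrite -exprz_exp -exprnP zeta2. Qed.

Lemma zeta_mul_conj : zeta * zeta^* = 1.
Proof. by rewrite -normCK -normrX zeta2 normCi. Qed.

Lemma zeta_neq0 : zeta != 0.
Proof. by apply: contra_eq_neq zeta_mul_conj => ->; rewrite mul0r eq_sym oner_eq0. Qed.

Lemma conj_zeta_expz (c : int) : (zeta ^ c)^* = zeta ^ (- c).
Proof.
have conj_zeta : zeta^* = zeta^-1.
  by rewrite -[zeta^*](mulKf zeta_neq0) zeta_mul_conj mulr1.
by rewrite -exprz_inv -conj_zeta; apply: fmorphXz.
Qed.

Lemma expr_i4 : 'i ^+ 4 = 1 :> C.
Proof. by rewrite (exprM _ 2 2) sqrCi sqrrN expr1n. Qed.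

Lemma zeta8 : zeta ^+ 8 = 1.
Proof. by rewrite (exprM _ 2 4) zeta2 expr_i4. Qed.

Lemma zeta_expz_mod (a b : int) : (a = b %[mod 8])%Z -> zeta ^ a = zeta ^ b.
Proof. exact: exprz_mod zeta8. Qed.

Lemma expz_i_neq1 (c : int) : ~~ (4 %| c)%Z -> 'i ^ c != 1 :> C.
Proof.
move=> ndvd_c; rewrite (exprz_mod _ expr_i4 (esym (modz_mod c 4))) //.
have : (c %% 4)%Z != 0 by apply: contra ndvd_c => /eqP/dvdz_mod0P.
have : (0 <= c %% 4 < 4)%Z by rewrite modz_ge0 ?ltz_pmod.
case: (c %% 4)%Z => [[|[|[|[|r]]]]|r] //= _ _; rewrite -exprnP.
- by apply: contra_neq (oppr1_neq1 C); rewrite expr1 => i1; rewrite -sqrCi i1 expr1n.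
- by rewrite sqrCi oppr1_neq1.
- apply: contra_neq (oppr1_neq1 C); rewrite exprS sqrCi mulrN1 => mi.
  by rewrite -sqrCi -sqrrN mi expr1n.
Qed.

Lemma sum_zeta_expz_eq0 (c : int) :
  ~~ (4 %| c)%Z -> \sum_(b < 4) zeta ^ (2 * b%:Z * c) = 0.
Proof.
move=> ndvd_c; rewrite (eq_bigr (fun b : 'I_4 => ('i ^ c) ^+ b)) => [|b _].
  apply: sum_expr_eq0 (expz_i_neq1 ndvd_c).
  by rewrite exprnP exprz_exp mulrC -exprz_exp -exprnP expr_i4 exp1rz.
by rewrite -mulrA [_ * c]mulrC zeta_expz2 exprnP exprz_exp.
Qed.

Lemma dotv_zeta d (f g : 'I_d -> int) :
  dotv (fun i => zeta ^ f i) (fun i => zeta ^ g i) = \sum_i zeta ^ (f i - g i).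
Proof. by apply: eq_bigr => i _; rewrite conj_zeta_expz expfzDr ?zeta_neq0. Qed.

Definition chirp (k a : 'I_4) : C := zeta ^ (a%:Z ^+ 2 + 2 * k%:Z * a%:Z).

Lemma chirp_basis : orthogonal_basis chirp.
Proof.
have dotv_chirp k l :
    dotv (chirp k) (chirp l) = \sum_(a < 4) zeta ^ (2 * a%:Z * (k%:Z - l%:Z)).
  by rewrite dotv_zeta; apply: eq_bigr => a _; congr (zeta ^ _); ring.
split=> [k|k l kl]; rewrite dotv_chirp.
  rewrite subrr (eq_bigr (fun _ => 1)) => [|a _]; last by rewrite mulr0.
  by rewrite sumr_const card_ord pnatr_eq0.
by apply: sum_zeta_expz_eq0; rewrite dvdz_natB !modn_small.
Qed.

Definition bell_phase (k n : nat) (x : int) : int := 2 * n%:Z * x - x ^+ 2 - 2 * k%:Z * x.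

Lemma bell_phase_mod k n (x y : int) :
  (x = y %[mod 4])%Z -> (bell_phase k n x = bell_phase k n y %[mod 8])%Z.
Proof.
move/eqP; rewrite eqz_mod_dvd => /dvdzP[t xy]; apply/eqP; rewrite eqz_mod_dvd.
have -> : x = y + t * 4 by rewrite -xy; ring.
apply/dvdzP; exists (n%:Z * t - y * t - 2 * t ^+ 2 - k%:Z * t).
by rewrite /bell_phase; ring.
Qed.

Lemma bob_state_bell k (nm : nat * nat) (b : 'I_4) :
  bob_state (bell C nm) (chirp k) b = 2^-1 * zeta ^ bell_phase k nm.1 (b%:Z - nm.2%:Z).
Proof.
have a0_lt4 : ((b + 3 * nm.2) %% 4 < 4)%N by rewrite ltn_pmod.
set a0 : 'I_4 := Ordinal a0_lt4.
have supp (a : 'I_4) : ((b : nat) == (a + nm.2) %% 4)%N = (a == a0).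
  have a4 := ltn_ord a; have b4 := ltn_ord b.
  by apply/eqP/eqP => [h|->]; [apply/val_inj => /= | rewrite /a0 /=]; lia.
rewrite /bob_state (bigD1 a0) //= big1 => [|a ne_a]; last first.
  by rewrite mxE supp (negbTE ne_a) mulr0.
rewrite mxE supp eqxx addr0 conj_zeta_expz (exprnP 'i) PoszM -zeta_expz2 mulrCA.
rewrite -expfzDr ?zeta_neq0 //; congr (_ * _); apply: zeta_expz_mod.
have -> : - (a0%:Z ^+ 2 + 2 * k%:Z * a0%:Z) + 2 * (a0%:Z * nm.1%:Z) =
          bell_phase k nm.1 a0 by rewrite /bell_phase; ring.
by apply: bell_phase_mod; rewrite /a0 /=; lia.
Qed.

Lemma dotv_bob_state_bell_neq0 k nm :
  dotv (bob_state (bell C nm) (chirp k)) (bob_state (bell C nm) (chirp k)) != 0.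
Proof.
rewrite (eq_dotv (bob_state_bell k nm) (bob_state_bell k nm)) dotvZ dotv_zeta.
rewrite (eq_bigr (fun _ => 1)) => [|b _]; last by rewrite subrr.
by rewrite sumr_const card_ord fmorphV rmorph_nat !mulf_neq0 ?invr_eq0 ?pnatr_eq0.
Qed.

Lemma dotv_bob_state_bell_orth k (nm nm' : nat * nat) :
  (nm.1 + nm.2 != nm'.1 + nm'.2 %[mod 4])%N ->
  dotv (bob_state (bell C nm) (chirp k)) (bob_state (bell C nm') (chirp k)) = 0.
Proof.
case: nm nm' => n m [n' m'] /= neq_nm.
rewrite (eq_dotv (bob_state_bell k (n, m)) (bob_state_bell k (n', m'))).
rewrite dotvZ dotv_zeta /=.
set c : int := (n + m)%N%:Z - (n' + m')%N%:Z.
set K : int :=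
  2 * (n'%:Z * m'%:Z - n%:Z * m%:Z + k%:Z * (m%:Z - m'%:Z)) + m'%:Z ^+ 2 - m%:Z ^+ 2.
rewrite (eq_bigr (fun b : 'I_4 => zeta ^ K * zeta ^ (2 * b%:Z * c))) => [|b _].
  by rewrite -mulr_sumr sum_zeta_expz_eq0 ?mulr0 // dvdz_natB.
by rewrite -expfzDr ?zeta_neq0 // /K /c /bell_phase !PoszD; congr (zeta ^ _); ring.
Qed.

Lemma bell_family_oneway (S : seq (nat * nat)) :
  size S = 4%N -> uniq [seq ((nm.1 + nm.2) %% 4)%N | nm <- S] ->
  oneway_LOCC_proj_distinguishable (@bell_family C S).
Proof.
case: S => [|s0 [|s1 [|s2 [|s3 []]]]] // _; set S := [:: s0; s1; s2; s3] => uniq_S; left.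
apply: (oneway_alice_first_orthogonal chirp_basis) => k; split=> [l|l l' ll'].
  exact: dotv_bob_state_bell_neq0.
apply: dotv_bob_state_bell_orth.
have := nth_uniq 0%N (s := [seq ((nm.1 + nm.2) %% 4)%N | nm <- S])
  (ltn_ord l) (ltn_ord l') uniq_S.
by rewrite !(nth_map (0, 0)%N) // => ->.
Qed.

End BellStates.

Theorem theorem5 (C : numClosedFieldType) :
  forall T : seq (nat * nat), T \in theorem5_sets ->
    oneway_LOCC_proj_distinguishable (@bell_family C ((0, 0)%N :: T)).
Proof.
move=> T T_in; have sets_ok : all (fun T => (size T == 3%N) &&
    uniq [seq ((nm.1 + nm.2) %% 4)%N | nm <- (0, 0)%N :: T]) theorem5_sets by [].
case/andP: (allP sets_ok T T_in) => /eqP size_T uniq_T.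
by apply: bell_family_oneway; rewrite /= ?size_T.
Qed.
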